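(* Let $\theta\in\pi(\mathbb{Q}\setminus\mathbb{Z})$, $\mu\in\mathbb{C}\setminus\{0,1\}$ and $a,b\in\mathbb{C}^n$ with $a\neq b$, and let $G$ be the group generated by $f=(a,e^{i\theta})$ and $g=(b,\mu)$. Then $G(a)$ is closed and discrete in $\mathbb{C}^n$ if and only if $G\subset\mathcal{S}_2\mathcal{R}_n$ or $G\subset\mathcal{S}_3\mathcal{R}_n$.
   Context: For $c\in\mathbb{C}^n$ and $\nu\in\mathbb{C}\setminus\{0,1\}$, $(c,\nu)$ denotes the map $z\mapsto\nu(z-c)+c$ of $\mathbb{C}^n$. $H_2=(\frac{\pi}{2}+\pi\mathbb{Z})\cup\pi\mathbb{Z}$, $F_2=\{e^{ix}:x\in H_2\}$, $H_3=(\frac{\pi}{3}+\pi\mathbb{Z})\cup(-\frac{\pi}{3}+\pi\mathbb{Z})\cup\pi\mathbb{Z}$, $F_3=\{e^{ix}:x\in H_3\}$; for $i\in\{2,3\}$, $\mathcal{S}_i\mathcal{R}_n=\{z\mapsto\lambda z+v:\lambda\in F_i,\ v\in\mathbb{C}^n\}$. $G(a)=\{h(a):h\in G\}$. *)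

From Stdlib Require Import Reals Lra ZArith.
Open Scope R_scope.

Definition Cx : Type := (R * R)%type.
Definition Czero : Cx := (0, 0).
Definition Cone : Cx := (1, 0).
Definition Cadd (z w : Cx) : Cx := (fst z + fst w, snd z + snd w).
Definition Copp (z : Cx) : Cx := (- fst z, - snd z).
Definition Csub (z w : Cx) : Cx := Cadd z (Copp w).
Definition Cmul (z w : Cx) : Cx :=
  (fst z * fst w - snd z * snd w, fst z * snd w + snd z * fst w).
Definition Cnorm2 (z : Cx) : R := fst z * fst z + snd z * snd z.
Definition Cinv (z : Cx) : Cx := (fst z / Cnorm2 z, - snd z / Cnorm2 z).
Definition Cexpi (x : R) : Cx := (cos x, sin x).

(* ---------- Cx^n : vectors are nat -> Cx, only coordinates i < n matter ---------- *)
Definition vec : Type := nat -> Cx.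
Definition veq (n : nat) (z w : vec) : Prop := forall i, (i < n)%nat -> z i = w i.

Fixpoint sumR (n : nat) (f : nat -> R) : R :=
  match n with O => 0 | S m => sumR m f + f m end.

Definition vdist (n : nat) (z w : vec) : R :=
  sqrt (sumR n (fun i => Cnorm2 (Csub (z i) (w i)))).

(* Subsets of Cx^n are predicates on vec, compatible with veq. *)
Definition closed_in (n : nat) (S : vec -> Prop) : Prop :=
  forall z : vec,
    (forall eps, 0 < eps -> exists w, S w /\ vdist n z w < eps) -> S z.
Definition discrete_in (n : nat) (S : vec -> Prop) : Prop :=
  forall z : vec, S z ->
    exists eps, 0 < eps /\ forall w, S w -> vdist n z w < eps -> veq n w z.

Definition cmap (c : vec) (nu : Cx) : vec -> vec :=
  fun z i => Cadd (Cmul nu (Csub (z i) (c i))) (c i).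

Inductive in_group2 (a : vec) (la : Cx) (b : vec) (mu : Cx) : (vec -> vec) -> Prop :=
| ig_id : in_group2 a la b mu (fun z => z)
| ig_f  : forall h, in_group2 a la b mu h ->
            in_group2 a la b mu (fun z => cmap a la (h z))
| ig_fi : forall h, in_group2 a la b mu h ->
            in_group2 a la b mu (fun z => cmap a (Cinv la) (h z))
| ig_g  : forall h, in_group2 a la b mu h ->
            in_group2 a la b mu (fun z => cmap b mu (h z))
| ig_gi : forall h, in_group2 a la b mu h ->
            in_group2 a la b mu (fun z => cmap b (Cinv mu) (h z)).

Definition orbit (n : nat) (G : (vec -> vec) -> Prop) (p : vec) : vec -> Prop :=
  fun z => exists h, G h /\ veq n z (h p).

Definition H2 (x : R) : Prop :=
  exists k : Z, x = PI / 2 + IZR k * PI \/ x = IZR k * PI.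
Definition H3 (x : R) : Prop :=
  exists k : Z, x = PI / 3 + IZR k * PI \/ x = - (PI / 3) + IZR k * PI
                \/ x = IZR k * PI.
Definition F2 (l : Cx) : Prop := exists x, H2 x /\ l = Cexpi x.
Definition F3 (l : Cx) : Prop := exists x, H3 x /\ l = Cexpi x.

Definition in_SR (F : Cx -> Prop) (n : nat) (h : vec -> vec) : Prop :=
  exists (l : Cx) (v : vec), F l /\
    forall z, veq n (h z) (fun i => Cadd (Cmul l (z i)) (v i)).

Definition in_piQnotZ (theta : R) : Prop :=
  exists p q : Z, q <> 0%Z /\ ~ (Z.divide q p) /\ theta = PI * IZR p / IZR q.

From Stdlib Require Import Reals ZArith Lra Lia Nsatz Classical.
Open Scope R_scope.

(* Writing points of the complex line through [a] and [b] as [a + v (b - a)], the maps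
   [f] and [g] act as [v |-> la v] and [v |-> mu (v - 1) + 1], so the orbit of [a] is the
   set of translation parts of the affine group of C generated by these two maps.

   If [la] and [mu] are 4th (resp. 6th) roots of unity, those translation parts are Gaussian
   (resp. Eisenstein) integers, a 1-separated set, so the orbit is closed and discrete.

   Conversely, if [|mu| <> 1] the orbit accumulates at [b], so closedness and discreteness
   force [|mu| = 1].  The translations of the group then form a discrete additive subgroup
   of C, containing the commutator translation [(1 - mu) (la - 1) <> 0] and stable under
   multiplication by [la^{+-1}] and [mu^{+-1}].  A real scalar preserving such a subgroup is
   an integer, so [2 Re] of [la], [mu], [la mu] and [la conj(mu)] are integers; together
   with [la <> 1] this leaves only 4th or 6th roots of unity. *)

Ltac unfold_C := unfold Csub, Cadd, Copp, Cmul, Czero, Cone, Cnorm2 in *; simpl in *.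

Definition Cconj (z : Cx) : Cx := (fst z, - snd z).
Definition Cscale (c : R) (z : Cx) : Cx := (c * fst z, c * snd z).

Lemma Cnorm2_mul z w : Cnorm2 (Cmul z w) = Cnorm2 z * Cnorm2 w.
Proof. destruct z, w; unfold_C; ring. Qed.

Lemma Cnorm2_nonneg z : 0 <= Cnorm2 z.
Proof. destruct z; unfold_C; nra. Qed.

Lemma Cnorm2_eq0 z : Cnorm2 z = 0 -> z = Czero.
Proof.
  destruct z as [x y]; unfold_C; intro H.
  assert (x = 0) by nra; assert (y = 0) by nra; subst; reflexivity.
Qed.

Lemma Cnorm2_pos z : z <> Czero -> 0 < Cnorm2 z.
Proof.
  intro Hz; destruct (Cnorm2_nonneg z) as [|H]; [assumption|].
  exfalso; apply Hz, Cnorm2_eq0; auto.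
Qed.

Lemma Csub_eq0 z w : Csub z w = Czero -> z = w.
Proof. destruct z, w; unfold_C; intro H; injection H; intros; f_equal; lra. Qed.

Lemma Cnorm2_Cinv z : z <> Czero -> Cnorm2 (Cinv z) = / Cnorm2 z.
Proof.
  intro Hz; pose proof (Cnorm2_pos z Hz).
  destruct z as [x y]; unfold Cinv, Cnorm2 in *; simpl in *; field; lra.
Qed.

Lemma Cmul_Cinv z : z <> Czero -> Cmul z (Cinv z) = Cone.
Proof.
  intro Hz; pose proof (Cnorm2_pos z Hz).
  destruct z as [x y]; unfold Cinv, Cnorm2, Cmul, Cone in *; simpl in *; f_equal; field; lra.
Qed.

Lemma Cinv_unit z : Cnorm2 z = 1 -> Cinv z = Cconj z.
Proof. intro H; unfold Cinv, Cconj; rewrite H; f_equal; field. Qed.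

Lemma Cnorm2_Cexpi x : Cnorm2 (Cexpi x) = 1.
Proof. unfold Cexpi, Cnorm2; simpl; rewrite <- (sin2_cos2 x); unfold Rsqr; ring. Qed.

Lemma Cexpi_add x y : Cmul (Cexpi x) (Cexpi y) = Cexpi (x + y).
Proof. unfold Cexpi, Cmul; simpl; rewrite cos_plus, sin_plus; f_equal; ring. Qed.

Lemma Cinv_Cexpi x : Cinv (Cexpi x) = Cexpi (- x).
Proof.
  rewrite Cinv_unit by apply Cnorm2_Cexpi.
  unfold Cexpi, Cconj; simpl; rewrite cos_neg, sin_neg; reflexivity.
Qed.

Lemma sqrt_lt_of_lt_sqr x e : 0 <= x -> 0 < e -> x < e * e -> sqrt x < e.
Proof. intros. rewrite <- (sqrt_square e) by lra. apply sqrt_lt_1_alt; lra. Qed.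

Lemma sumR_ext n f g : (forall i, (i < n)%nat -> f i = g i) -> sumR n f = sumR n g.
Proof. induction n; simpl; intros H; auto. rewrite IHn, H; auto; intros; apply H; lia. Qed.

Lemma sumR_scal n c f : sumR n (fun i => c * f i) = c * sumR n f.
Proof. induction n; simpl; [ring | rewrite IHn; ring]. Qed.

Lemma sumR_nonneg n f : (forall i, 0 <= f i) -> 0 <= sumR n f.
Proof. induction n; simpl; intros H; [lra|]. specialize (IHn H); specialize (H n); lra. Qed.

Lemma sumR_term_le n f i : (forall i, 0 <= f i) -> (i < n)%nat -> f i <= sumR n f.
Proof.
  induction n; simpl; intros H Hi; [lia|].
  destruct (Nat.eq_dec i n) as [->|].
  - pose proof (sumR_nonneg n f H); lra.
  - pose proof (IHn H ltac:(lia)); specialize (H n); lra.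
Qed.

Lemma vdist_nonneg n z w : 0 <= vdist n z w.
Proof. apply sqrt_pos. Qed.

Lemma vdist_sqr n z w :
  vdist n z w * vdist n z w = sumR n (fun i => Cnorm2 (Csub (z i) (w i))).
Proof. apply sqrt_sqrt, sumR_nonneg; intros; apply Cnorm2_nonneg. Qed.

Lemma Cnorm2_coord_le n z w i :
  (i < n)%nat -> Cnorm2 (Csub (z i) (w i)) <= vdist n z w * vdist n z w.
Proof.
  intro Hi; rewrite vdist_sqr.
  apply (sumR_term_le n (fun i => Cnorm2 (Csub (z i) (w i)))); auto.
  intros; apply Cnorm2_nonneg.
Qed.

Lemma vdist_veq_l n z z' w : veq n z z' -> vdist n z w = vdist n z' w.
Proof. intro H; unfold vdist; f_equal; apply sumR_ext; intros; rewrite H; auto. Qed.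

Lemma vdist_veq_r n z w w' : veq n w w' -> vdist n z w = vdist n z w'.
Proof. intro H; unfold vdist; f_equal; apply sumR_ext; intros; rewrite H; auto. Qed.

Lemma vdist_eq0 n z w : vdist n z w = 0 -> veq n z w.
Proof.
  intros H i Hi; pose proof (Cnorm2_coord_le n z w i Hi) as Hle; rewrite H in Hle.
  apply Csub_eq0, Cnorm2_eq0.
  pose proof (Cnorm2_nonneg (Csub (z i) (w i))); lra.
Qed.

Definition line_pt (a b : vec) (v : Cx) : vec :=
  fun i => Cadd (a i) (Cmul v (Csub (b i) (a i))).

Definition sqdist n (a b : vec) : R := sumR n (fun i => Cnorm2 (Csub (b i) (a i))).

Lemma vdist_line_pt n a b v v' :
  vdist n (line_pt a b v) (line_pt a b v') = sqrt (Cnorm2 (Csub v v') * sqdist n a b).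
Proof.
  unfold vdist, sqdist; f_equal; rewrite <- sumR_scal; apply sumR_ext; intros.
  rewrite <- Cnorm2_mul; f_equal; unfold line_pt.
  destruct (a i), (b i), v, v'; unfold_C; f_equal; ring.
Qed.

Lemma line_pt_0 n a b : veq n (line_pt a b Czero) a.
Proof. intros i _; unfold line_pt; destruct (a i), (b i); unfold_C; f_equal; ring. Qed.

Lemma line_pt_1 n a b : veq n (line_pt a b Cone) b.
Proof. intros i _; unfold line_pt; destruct (a i), (b i); unfold_C; f_equal; ring. Qed.

Lemma exists_coord_neq n (a b : vec) :
  ~ veq n a b -> exists i, (i < n)%nat /\ Csub (b i) (a i) <> Czero.
Proof.
  intro Hab; apply NNPP; intro Hno; apply Hab; intros i Hi.
  symmetry; apply Csub_eq0, NNPP; eauto.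
Qed.

Lemma sqdist_pos n a b : ~ veq n a b -> 0 < sqdist n a b.
Proof.
  intro Hab; destruct (exists_coord_neq n a b Hab) as [i [Hi Hd]].
  pose proof (sumR_term_le n (fun i => Cnorm2 (Csub (b i) (a i))) i
                (fun _ => Cnorm2_nonneg _) Hi).
  pose proof (Cnorm2_pos _ Hd); unfold sqdist; simpl in *; lra.
Qed.

Lemma line_pt_inj n a b v v' :
  ~ veq n a b -> veq n (line_pt a b v) (line_pt a b v') -> v = v'.
Proof.
  intros Hab E; destruct (exists_coord_neq n a b Hab) as [i [Hi Hd]].
  specialize (E i Hi); unfold line_pt in E.
  assert (Hmul : Cmul (Csub v v') (Csub (b i) (a i)) = Czero).
  { revert E; destruct (a i), (b i), v, v'; unfold_C; intro E; injection E; intros.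
    f_equal; lra. }
  apply Csub_eq0, Cnorm2_eq0.
  apply (f_equal Cnorm2) in Hmul; rewrite Cnorm2_mul in Hmul.
  pose proof (Cnorm2_pos _ Hd).
  replace (Cnorm2 Czero) with 0 in Hmul by (unfold_C; ring).
  nra.
Qed.

(* [(l, v)] stands for [z |-> l z + v]; in the coordinate [v] of [line_pt a b v] the
   generators [(a, la)] and [(b, mu)] act as [v |-> la v] and [v |-> mu (v - 1) + 1]. *)
Inductive aff_group (la mu : Cx) : Cx -> Cx -> Prop :=
| aff_id : aff_group la mu Cone Czero
| aff_f : forall l v, aff_group la mu l v -> aff_group la mu (Cmul la l) (Cmul la v)
| aff_fi : forall l v, aff_group la mu l v ->
    aff_group la mu (Cmul (Cinv la) l) (Cmul (Cinv la) v)
| aff_g : forall l v, aff_group la mu l v ->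
    aff_group la mu (Cmul mu l) (Cadd (Cmul mu (Csub v Cone)) Cone)
| aff_gi : forall l v, aff_group la mu l v ->
    aff_group la mu (Cmul (Cinv mu) l) (Cadd (Cmul (Cinv mu) (Csub v Cone)) Cone).

Lemma aff_group_ext la mu l v l' v' :
  aff_group la mu l v -> l = l' -> v = v' -> aff_group la mu l' v'.
Proof. intros H -> ->; exact H. Qed.

Lemma aff_group_comp la mu l1 v1 l2 v2 :
  aff_group la mu l1 v1 -> aff_group la mu l2 v2 ->
  aff_group la mu (Cmul l1 l2) (Cadd (Cmul l1 v2) v1).
Proof.
  intros H1 H2; induction H1.
  - eapply aff_group_ext; [exact H2| |]; destruct l2, v2; unfold_C; f_equal; ring.
  - eapply aff_group_ext; [apply aff_f, IHaff_group| |];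
      destruct l, v, l2, v2, la; unfold_C; f_equal; ring.
  - eapply aff_group_ext; [apply aff_fi, IHaff_group| |];
      destruct l, v, l2, v2, (Cinv la); unfold_C; f_equal; ring.
  - eapply aff_group_ext; [apply aff_g, IHaff_group| |];
      destruct l, v, l2, v2, mu; unfold_C; f_equal; ring.
  - eapply aff_group_ext; [apply aff_gi, IHaff_group| |];
      destruct l, v, l2, v2, (Cinv mu); unfold_C; f_equal; ring.
Qed.

Definition aff_on_line (a b : vec) (l v : Cx) (h : vec -> vec) : Prop :=
  forall z i, h z i = Cadd (Cmul l (Csub (z i) (a i))) (line_pt a b v i).

Lemma in_group2_aff a la b mu h :
  in_group2 a la b mu h -> exists l v, aff_group la mu l v /\ aff_on_line a b l v h.
Proof.
  unfold aff_on_line.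
  induction 1 as [|h _ [l [v [Hg He]]]|h _ [l [v [Hg He]]]|h _ [l [v [Hg He]]]
                 |h _ [l [v [Hg He]]]].
  - exists Cone, Czero; split; [constructor|]; intros z i; unfold line_pt.
    destruct (z i), (a i), (b i); unfold_C; f_equal; ring.
  - do 2 eexists; split; [apply aff_f, Hg|]; intros z i; unfold cmap; rewrite He.
    unfold line_pt; destruct (z i), (a i), (b i), l, v, la; unfold_C; f_equal; ring.
  - do 2 eexists; split; [apply aff_fi, Hg|]; intros z i; unfold cmap; rewrite He.
    unfold line_pt; destruct (z i), (a i), (b i), l, v, (Cinv la); unfold_C; f_equal; ring.
  - do 2 eexists; split; [apply aff_g, Hg|]; intros z i; unfold cmap; rewrite He.
    unfold line_pt; destruct (z i), (a i), (b i), l, v, mu; unfold_C; f_equal; ring.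
  - do 2 eexists; split; [apply aff_gi, Hg|]; intros z i; unfold cmap; rewrite He.
    unfold line_pt; destruct (z i), (a i), (b i), l, v, (Cinv mu); unfold_C; f_equal; ring.
Qed.

Lemma aff_in_group2 a la b mu l v :
  aff_group la mu l v -> exists h, in_group2 a la b mu h /\ aff_on_line a b l v h.
Proof.
  unfold aff_on_line.
  induction 1 as [|l v _ [h [H He]]|l v _ [h [H He]]|l v _ [h [H He]]|l v _ [h [H He]]].
  - exists (fun z => z); split; [constructor|]; intros z i; unfold line_pt.
    destruct (z i), (a i), (b i); unfold_C; f_equal; ring.
  - eexists; split; [apply ig_f, H|]; intros z i; unfold cmap; rewrite He.
    unfold line_pt; destruct (z i), (a i), (b i), l, v, la; unfold_C; f_equal; ring.
  - eexists; split; [apply ig_fi, H|]; intros z i; unfold cmap; rewrite He.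
    unfold line_pt; destruct (z i), (a i), (b i), l, v, (Cinv la); unfold_C; f_equal; ring.
  - eexists; split; [apply ig_g, H|]; intros z i; unfold cmap; rewrite He.
    unfold line_pt; destruct (z i), (a i), (b i), l, v, mu; unfold_C; f_equal; ring.
  - eexists; split; [apply ig_gi, H|]; intros z i; unfold cmap; rewrite He.
    unfold line_pt; destruct (z i), (a i), (b i), l, v, (Cinv mu); unfold_C; f_equal; ring.
Qed.

Lemma aff_on_line_at_base a b l v h i : aff_on_line a b l v h -> h a i = line_pt a b v i.
Proof. intro He; rewrite He; destruct (a i), (line_pt a b v i), l; unfold_C; f_equal; ring. Qed.

Lemma orbit_line n a la b mu z :
  orbit n (in_group2 a la b mu) a z <->
  exists l v, aff_group la mu l v /\ veq n z (line_pt a b v).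
Proof.
  split.
  - intros [h [Hh Hz]]; destruct (in_group2_aff a la b mu h Hh) as [l [v [Hg He]]].
    exists l, v; split; auto; intros i Hi; rewrite Hz by exact Hi.
    apply (aff_on_line_at_base a b l v h i He).
  - intros [l [v [Hg Hz]]]; destruct (aff_in_group2 a la b mu l v Hg) as [h [Hh He]].
    exists h; split; auto; intros i Hi; rewrite Hz by exact Hi.
    symmetry; apply (aff_on_line_at_base a b l v h i He).
Qed.

Lemma Cnorm2_sub_le c1 c2 : Cnorm2 (Csub c2 c1) <= 2 * Cnorm2 c1 + 2 * Cnorm2 c2.
Proof.
  destruct c1 as [x1 y1], c2 as [x2 y2]; unfold_C.
  pose proof (Rle_0_sqr (x1 + x2)); pose proof (Rle_0_sqr (y1 + y2)); unfold Rsqr in *; nra.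
Qed.

Lemma line_pts_sub_le n a b z v1 v2 i : (i < n)%nat ->
  Cnorm2 (Csub v1 v2) * Cnorm2 (Csub (b i) (a i)) <=
  2 * (vdist n z (line_pt a b v1) * vdist n z (line_pt a b v1)) +
  2 * (vdist n z (line_pt a b v2) * vdist n z (line_pt a b v2)).
Proof.
  intro Hi; rewrite <- Cnorm2_mul.
  pose proof (Cnorm2_coord_le n z (line_pt a b v1) i Hi).
  pose proof (Cnorm2_coord_le n z (line_pt a b v2) i Hi).
  pose proof (Cnorm2_sub_le (Csub (z i) (line_pt a b v1 i)) (Csub (z i) (line_pt a b v2 i))).
  replace (Csub (Csub (z i) (line_pt a b v2 i)) (Csub (z i) (line_pt a b v1 i)))
    with (Cmul (Csub v1 v2) (Csub (b i) (a i))) in *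
    by (unfold line_pt; destruct (z i), (a i), (b i), v1, v2; unfold_C; f_equal; ring).
  lra.
Qed.

Lemma orbit_point_near n a la b mu z eps :
  (exists w, orbit n (in_group2 a la b mu) a w /\ vdist n z w < eps) ->
  exists l v, aff_group la mu l v /\ vdist n z (line_pt a b v) < eps.
Proof.
  intros [w [Hw Hd]]; apply orbit_line in Hw; destruct Hw as [l [v [Hg Hv]]].
  exists l, v; split; auto; rewrite <- (vdist_veq_r n z w _ Hv); exact Hd.
Qed.

Section SeparatedOrbit.
Variables (n : nat) (a b : vec) (la mu : Cx) (Lam : Cx -> Prop).
Hypothesis a_neq_b : ~ veq n a b.
Hypothesis aff_group_Lam : forall l v, aff_group la mu l v -> Lam v.
Hypothesis Lam_sep : forall u w, Lam u -> Lam w -> u <> w -> 1 <= Cnorm2 (Csub u w).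

Lemma separated_orbit_closed : closed_in n (orbit n (in_group2 a la b mu) a).
Proof.
  intros z Hz; destruct (exists_coord_neq n a b a_neq_b) as [i [Hi Hd]].
  pose proof (Cnorm2_pos _ Hd) as HD; set (D := Cnorm2 (Csub (b i) (a i))) in *.
  set (eps := sqrt D / 2).
  assert (Heps : 0 < eps) by (unfold eps; pose proof (sqrt_lt_R0 D HD); lra).
  assert (Heps2 : eps * eps = D / 4).
  { unfold eps; replace (sqrt D / 2 * (sqrt D / 2)) with (sqrt D * sqrt D / 4) by field.
    rewrite sqrt_sqrt; lra. }
  destruct (orbit_point_near n a la b mu z eps (Hz eps Heps)) as [l1 [v1 [Hg1 Hd1]]].
  (* two points [v1 <> v2] of the 1-separated set [Lam] cannot both be [eps]-close to [z] *)
  assert (Hsmall : forall e, 0 < e -> vdist n z (line_pt a b v1) < e).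
  { intros e He.
    destruct (orbit_point_near n a la b mu z (Rmin e eps) (Hz _ (Rmin_pos _ _ He Heps)))
      as [l2 [v2 [Hg2 Hd2]]].
    pose proof (Rmin_l e eps); pose proof (Rmin_r e eps).
    destruct (classic (v1 = v2)) as [<-|Hne]; [lra|exfalso].
    pose proof (Lam_sep v1 v2 (aff_group_Lam _ _ Hg1) (aff_group_Lam _ _ Hg2) Hne).
    pose proof (line_pts_sub_le n a b z v1 v2 i Hi) as Hle; fold D in Hle.
    pose proof (vdist_nonneg n z (line_pt a b v1)).
    pose proof (vdist_nonneg n z (line_pt a b v2)).
    assert (vdist n z (line_pt a b v1) * vdist n z (line_pt a b v1) < D / 4) by nra.
    assert (vdist n z (line_pt a b v2) * vdist n z (line_pt a b v2) < D / 4) by nra.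
    nra. }
  apply orbit_line; exists l1, v1; split; auto; apply vdist_eq0.
  destruct (vdist_nonneg n z (line_pt a b v1)) as [Hpos|]; auto.
  specialize (Hsmall _ Hpos); lra.
Qed.

Lemma separated_orbit_discrete : discrete_in n (orbit n (in_group2 a la b mu) a).
Proof.
  pose proof (sqdist_pos n a b a_neq_b) as HS.
  intros z Hz; apply orbit_line in Hz; destruct Hz as [l0 [v0 [Hg0 Hz]]].
  exists (sqrt (sqdist n a b)); split; [apply sqrt_lt_R0; auto|].
  intros w Hw Hdw; apply orbit_line in Hw; destruct Hw as [l [v [Hg Hw]]].
  rewrite (vdist_veq_l n z _ _ Hz), (vdist_veq_r n _ _ _ Hw), vdist_line_pt in Hdw.
  destruct (classic (v0 = v)) as [<-|Hne].
  - intros i Hi; rewrite Hw, Hz; auto.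
  - exfalso; pose proof (Lam_sep _ _ (aff_group_Lam _ _ Hg0) (aff_group_Lam _ _ Hg) Hne).
    assert (sqrt (sqdist n a b) <= sqrt (Cnorm2 (Csub v0 v) * sqdist n a b))
      by (apply sqrt_le_1_alt; nra).
    lra.
Qed.

End SeparatedOrbit.

Lemma aff_group_closed (Lam : Cx -> Prop) la mu :
  Lam Cone -> Lam Czero -> Lam la -> Lam (Cinv la) -> Lam mu -> Lam (Cinv mu) ->
  (forall u w, Lam u -> Lam w -> Lam (Cmul u w)) ->
  (forall u w, Lam u -> Lam w -> Lam (Cadd u w)) ->
  (forall u w, Lam u -> Lam w -> Lam (Csub u w)) ->
  forall l v, aff_group la mu l v -> Lam l /\ Lam v.
Proof. intros; match goal with H : aff_group _ _ _ _ |- _ => induction H end; intuition. Qed.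

Definition gauss_int (z : Cx) : Prop := exists m1 m2 : Z, z = (IZR m1, IZR m2).

Definition s3 : R := sqrt 3 / 2.

Definition eisen_int (z : Cx) : Prop :=
  exists m1 m2 : Z, z = (IZR m1 + IZR m2 / 2, IZR m2 * s3).

Lemma s3_sqr : s3 * s3 = 3 / 4.
Proof.
  unfold s3; replace (sqrt 3 / 2 * (sqrt 3 / 2)) with (sqrt 3 * sqrt 3 / 4) by field.
  rewrite sqrt_sqrt; lra.
Qed.

Lemma gauss_int_mul u w : gauss_int u -> gauss_int w -> gauss_int (Cmul u w).
Proof.
  intros [m1 [m2 ->]] [k1 [k2 ->]]; exists (m1 * k1 - m2 * k2)%Z, (m1 * k2 + m2 * k1)%Z.
  unfold_C; rewrite minus_IZR, plus_IZR, !mult_IZR; reflexivity.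
Qed.

Lemma gauss_int_add u w : gauss_int u -> gauss_int w -> gauss_int (Cadd u w).
Proof.
  intros [m1 [m2 ->]] [k1 [k2 ->]]; exists (m1 + k1)%Z, (m2 + k2)%Z.
  unfold_C; rewrite !plus_IZR; reflexivity.
Qed.

Lemma gauss_int_sub u w : gauss_int u -> gauss_int w -> gauss_int (Csub u w).
Proof.
  intros [m1 [m2 ->]] [k1 [k2 ->]]; exists (m1 - k1)%Z, (m2 - k2)%Z.
  unfold_C; rewrite !minus_IZR; reflexivity.
Qed.

Lemma eisen_int_mul u w : eisen_int u -> eisen_int w -> eisen_int (Cmul u w).
Proof.
  intros [m1 [m2 ->]] [k1 [k2 ->]].
  exists (m1 * k1 - m2 * k2)%Z, (m1 * k2 + m2 * k1 + m2 * k2)%Z.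
  unfold_C; rewrite minus_IZR, !plus_IZR, !mult_IZR; pose proof s3_sqr.
  f_equal; [|field].
  replace (IZR m2 * s3 * (IZR k2 * s3)) with (IZR m2 * IZR k2 * (s3 * s3)) by ring.
  rewrite s3_sqr; field.
Qed.

Lemma eisen_int_add u w : eisen_int u -> eisen_int w -> eisen_int (Cadd u w).
Proof.
  intros [m1 [m2 ->]] [k1 [k2 ->]]; exists (m1 + k1)%Z, (m2 + k2)%Z.
  unfold_C; rewrite !plus_IZR; f_equal; field.
Qed.

Lemma eisen_int_sub u w : eisen_int u -> eisen_int w -> eisen_int (Csub u w).
Proof.
  intros [m1 [m2 ->]] [k1 [k2 ->]]; exists (m1 - k1)%Z, (m2 - k2)%Z.
  unfold_C; rewrite !minus_IZR; f_equal; field.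
Qed.

Lemma gauss_int_sep u w : gauss_int u -> gauss_int w -> u <> w -> 1 <= Cnorm2 (Csub u w).
Proof.
  intros Hu Hw Hne; destruct (gauss_int_sub u w Hu Hw) as [m1 [m2 Hm]]; rewrite Hm.
  assert (Hnz : (m1, m2) <> (0, 0)%Z).
  { intros E; injection E; intros; subst; apply Hne, Csub_eq0; exact Hm. }
  assert (1 <= m1 * m1 + m2 * m2)%Z
    by (destruct (Z.eq_dec m1 0), (Z.eq_dec m2 0); subst; try congruence; nia).
  unfold_C; rewrite <- !mult_IZR, <- plus_IZR; apply IZR_le; assumption.
Qed.

Lemma eisen_int_sep u w : eisen_int u -> eisen_int w -> u <> w -> 1 <= Cnorm2 (Csub u w).
Proof.
  intros Hu Hw Hne; destruct (eisen_int_sub u w Hu Hw) as [m1 [m2 Hm]]; rewrite Hm.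
  assert (Hnz : (m1, m2) <> (0, 0)%Z).
  { intros E; injection E; intros; subst; apply Hne, Csub_eq0; rewrite Hm.
    unfold Czero; f_equal; simpl; field. }
  assert (Hq : (1 <= m1 * m1 + m1 * m2 + m2 * m2)%Z)
    by (destruct (Z.eq_dec m1 0), (Z.eq_dec m2 0); subst; try congruence; nia).
  apply IZR_le in Hq; rewrite !plus_IZR, !mult_IZR in Hq; unfold_C.
  replace (IZR m2 * s3 * (IZR m2 * s3)) with (IZR m2 * IZR m2 * (s3 * s3)) by ring.
  rewrite s3_sqr; nra.
Qed.

Definition roots (s : R) (x : Cx) : Prop := exists k : Z, x = Cexpi (IZR k * s).

Lemma Cexpi_0 : Cexpi 0 = Cone.
Proof. unfold Cexpi, Cone; rewrite cos_0, sin_0; reflexivity. Qed.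

Lemma roots_one s : roots s Cone.
Proof. exists 0%Z; rewrite Rmult_0_l, Cexpi_0; reflexivity. Qed.

Lemma roots_mul s u w : roots s u -> roots s w -> roots s (Cmul u w).
Proof. intros [k ->] [j ->]; exists (k + j)%Z; rewrite Cexpi_add, plus_IZR; f_equal; ring. Qed.

Lemma roots_inv s u : roots s u -> roots s (Cinv u).
Proof. intros [k ->]; exists (- k)%Z; rewrite Cinv_Cexpi, opp_IZR; f_equal; ring. Qed.

Lemma roots_ind (P : Cx -> Prop) s :
  P Cone -> (forall u, P u -> P (Cmul (Cexpi s) u)) ->
  (forall u, P u -> P (Cmul (Cexpi (- s)) u)) -> forall x, roots s x -> P x.
Proof.
  intros H1 Hs Hms x [k ->]; induction k using Z.peano_ind.
  - rewrite Rmult_0_l, Cexpi_0; exact H1.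
  - rewrite succ_IZR, Rmult_plus_distr_r, Rmult_1_l, Rplus_comm, <- Cexpi_add; auto.
  - rewrite <- Z.sub_1_r, minus_IZR; replace ((IZR k - 1) * s) with (- s + IZR k * s) by ring.
    rewrite <- Cexpi_add; auto.
Qed.

Lemma roots4_gauss_int x : roots (PI / 2) x -> gauss_int x.
Proof.
  apply roots_ind; [exists 1%Z, 0%Z; reflexivity| |]; intros u Hu; apply gauss_int_mul; auto;
    unfold Cexpi; rewrite ?cos_neg, ?sin_neg, cos_PI2, sin_PI2.
  - exists 0%Z, 1%Z; reflexivity.
  - exists 0%Z, (-1)%Z; f_equal; simpl; ring.
Qed.

Lemma roots6_eisen_int x : roots (PI / 3) x -> eisen_int x.
Proof.
  apply roots_ind; [exists 1%Z, 0%Z; unfold Cone; f_equal; simpl; field| |];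
    intros u Hu; apply eisen_int_mul; auto;
    unfold Cexpi; rewrite ?cos_neg, ?sin_neg, cos_PI3, sin_PI3; fold s3.
  - exists 0%Z, 1%Z; f_equal; simpl; field.
  - exists 1%Z, (-1)%Z; f_equal; simpl; field.
Qed.

Lemma F2_roots x : F2 x <-> roots (PI / 2) x.
Proof.
  split.
  - intros [t [[k [-> | ->]] ->]].
    + exists (2 * k + 1)%Z; f_equal; rewrite plus_IZR, mult_IZR; simpl; field.
    + exists (2 * k)%Z; f_equal; rewrite mult_IZR; simpl; field.
  - intros [k ->]; exists (IZR k * (PI / 2)); split; auto.
    destruct (Zeven_odd_dec k) as [He|Ho].
    + apply Zeven_ex in He; destruct He as [j ->]; exists j; right.
      rewrite mult_IZR; field.
    + apply Zodd_ex in Ho; destruct Ho as [j ->]; exists j; left.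
      rewrite plus_IZR, mult_IZR; field.
Qed.

Lemma F3_roots x : F3 x <-> roots (PI / 3) x.
Proof.
  split.
  - intros [t [[k [-> | [-> | ->]]] ->]].
    + exists (3 * k + 1)%Z; f_equal; rewrite plus_IZR, mult_IZR; simpl; field.
    + exists (3 * k - 1)%Z; f_equal; rewrite minus_IZR, mult_IZR; simpl; field.
    + exists (3 * k)%Z; f_equal; rewrite mult_IZR; simpl; field.
  - intros [k ->]; exists (IZR k * (PI / 3)); split; auto.
    pose proof (Z.div_mod k 3 ltac:(lia)); pose proof (Z.mod_pos_bound k 3 ltac:(lia)).
    set (j := (k / 3)%Z) in *; set (r := (k mod 3)%Z) in *.
    assert (r = 0 \/ r = 1 \/ r = 2)%Z as [R|[R|R]] by lia; rewrite R in H; rewrite H.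
    + exists j; right; right; rewrite plus_IZR, mult_IZR; simpl; field.
    + exists j; left; rewrite plus_IZR, mult_IZR; simpl; field.
    + exists (j + 1)%Z; right; left; rewrite !plus_IZR, mult_IZR; simpl; field.
Qed.

Lemma orbit_closed_discrete_of_roots n a b la mu s (Lam : Cx -> Prop) :
  ~ veq n a b -> roots s la -> roots s mu -> (forall x, roots s x -> Lam x) ->
  (forall u w, Lam u -> Lam w -> Lam (Cmul u w)) ->
  (forall u w, Lam u -> Lam w -> Lam (Cadd u w)) ->
  (forall u w, Lam u -> Lam w -> Lam (Csub u w)) ->
  (forall u w, Lam u -> Lam w -> u <> w -> 1 <= Cnorm2 (Csub u w)) ->
  closed_in n (orbit n (in_group2 a la b mu) a) /\
  discrete_in n (orbit n (in_group2 a la b mu) a).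
Proof.
  intros Hab Hla Hmu Hroots Hmul Hadd Hsub Hsep.
  assert (Hone : Lam Cone) by (apply Hroots, roots_one).
  assert (Hzero : Lam Czero)
    by (replace Czero with (Csub Cone Cone) by (unfold_C; f_equal; ring); auto).
  assert (HLam : forall l v, aff_group la mu l v -> Lam v)
    by (intros l v Hg; refine (proj2 (aff_group_closed Lam la mu _ _ _ _ _ _ _ _ _ l v Hg));
        auto using roots_inv).
  split;
    [apply (separated_orbit_closed n a b la mu Lam) |
     apply (separated_orbit_discrete n a b la mu Lam)];
    auto.
Qed.

Lemma in_SR_generator (F : Cx -> Prop) n c nu :
  (exists i, (i < n)%nat) -> in_SR F n (cmap c nu) -> F nu.
Proof.
  intros [i Hi] [l [v [Fl H]]].
  pose proof (H c i Hi) as E1; pose proof (H (fun j => Cadd (c j) Cone) i Hi) as E2.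
  unfold cmap in *; simpl in *; replace nu with l; auto.
  destruct (c i), l, v, nu; unfold_C; injection E1; injection E2; intros; f_equal; nra.
Qed.

Lemma exists_pow_mul_lt N S e : 0 <= N < 1 -> 0 < S -> 0 < e -> exists k, N ^ k * S < e.
Proof.
  intros HN HS He.
  destruct (pow_lt_1_zero N ltac:(rewrite Rabs_right; lra) (e / S)
              ltac:(apply Rdiv_lt_0_compat; lra)) as [K HK].
  exists K; specialize (HK K (le_n K)).
  rewrite Rabs_right in HK by (apply Rle_ge, pow_le; lra).
  apply (Rmult_lt_compat_r S) in HK; auto.
  replace (e / S * S) with e in HK by (field; lra); exact HK.
Qed.

Fixpoint Cpow (z : Cx) (k : nat) : Cx :=
  match k with O => Cone | S k => Cmul z (Cpow z k) end.

Lemma Cnorm2_Cpow z k : Cnorm2 (Cpow z k) = Cnorm2 z ^ k.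
Proof. induction k; simpl; [unfold_C; ring | rewrite Cnorm2_mul, IHk; reflexivity]. Qed.

(* The orbit points [b + nu^k (a - b)] accumulate at [b], which then lies in the orbit. *)
Lemma closed_discrete_orbit_no_contraction n a la b mu nu :
  ~ veq n a b ->
  closed_in n (orbit n (in_group2 a la b mu) a) ->
  discrete_in n (orbit n (in_group2 a la b mu) a) ->
  (forall l v, aff_group la mu l v ->
     aff_group la mu (Cmul nu l) (Cadd (Cmul nu (Csub v Cone)) Cone)) ->
  ~ 0 < Cnorm2 nu < 1.
Proof.
  intros Hab Hc Hd Hnu HN; pose proof (sqdist_pos n a b Hab) as HS.
  set (O := orbit n (in_group2 a la b mu) a) in *.
  set (p k := line_pt a b (Csub Cone (Cpow nu k))).
  assert (Hp : forall k, O (p k)).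
  { intro k; apply orbit_line; exists (Cpow nu k), (Csub Cone (Cpow nu k)); split.
    - induction k; simpl.
      + eapply aff_group_ext; [constructor | reflexivity | unfold_C; f_equal; ring].
      + eapply aff_group_ext; [apply Hnu, IHk | reflexivity |].
        destruct nu, (Cpow _ k); unfold_C; f_equal; ring.
    - intros i _; reflexivity. }
  assert (Hdist : forall k, vdist n b (p k) = sqrt (Cnorm2 nu ^ k * sqdist n a b)).
  { intro k; unfold p.
    rewrite <- (vdist_veq_l n _ _ _ (line_pt_1 n a b)), vdist_line_pt, <- Cnorm2_Cpow.
    do 3 f_equal; destruct (Cpow nu k); unfold_C; f_equal; ring. }
  assert (Hclose : forall e, 0 < e -> exists k, vdist n b (p k) < e).
  { intros e He; destruct (exists_pow_mul_lt (Cnorm2 nu) (sqdist n a b) (e * e))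
      as [k Hk]; try lra; try nra.
    exists k; rewrite Hdist; apply sqrt_lt_of_lt_sqr; auto.
    apply Rmult_le_pos; [apply pow_le|]; lra. }
  assert (Hb : O b)
    by (apply Hc; intros e He; destruct (Hclose e He) as [k Hk]; exists (p k); auto).
  destruct (Hd b Hb) as [e [He Hiso]]; destruct (Hclose e He) as [k Hk].
  assert (E : veq n (p k) (line_pt a b Cone)).
  { intros i Hi; rewrite (Hiso _ (Hp k) Hk), (line_pt_1 n a b); auto. }
  apply line_pt_inj in E; auto.
  assert (Hz : Cpow nu k = Czero)
    by (revert E; destruct (Cpow nu k); unfold_C; intro E; injection E; intros; f_equal; lra).
  apply (f_equal Cnorm2) in Hz; rewrite Cnorm2_Cpow in Hz.
  pose proof (pow_lt (Cnorm2 nu) k ltac:(lra)); unfold_C; lra.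
Qed.

Lemma closed_discrete_orbit_unit_mu n a la b mu :
  ~ veq n a b -> mu <> Czero ->
  closed_in n (orbit n (in_group2 a la b mu) a) ->
  discrete_in n (orbit n (in_group2 a la b mu) a) -> Cnorm2 mu = 1.
Proof.
  intros Hab Hmu Hc Hd; pose proof (Cnorm2_pos _ Hmu).
  destruct (Rtotal_order (Cnorm2 mu) 1) as [L|[E|G]]; auto; exfalso.
  - apply (closed_discrete_orbit_no_contraction n a la b mu mu); auto.
    intros; apply aff_g; auto.
  - apply (closed_discrete_orbit_no_contraction n a la b mu (Cinv mu)); auto.
    + intros; apply aff_gi; auto.
    + rewrite Cnorm2_Cinv by auto; split; [apply Rinv_0_lt_compat; lra|].
      rewrite <- Rinv_1; apply Rinv_lt_contravar; lra.
Qed.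

Lemma orbit_translations_discrete n a la b mu :
  ~ veq n a b -> discrete_in n (orbit n (in_group2 a la b mu) a) ->
  exists d, 0 < d /\ forall l t, aff_group la mu l t -> Cnorm2 t < d -> t = Czero.
Proof.
  intros Hab Hd; pose proof (sqdist_pos n a b Hab) as HS.
  assert (Ha : orbit n (in_group2 a la b mu) a a).
  { apply orbit_line; exists Cone, Czero; split; [constructor|].
    intros i Hi; symmetry; exact (line_pt_0 n a b i Hi). }
  destruct (Hd a Ha) as [e [He Hiso]].
  exists (e * e / sqdist n a b); split; [apply Rdiv_lt_0_compat; nra|].
  intros l t Hg Ht.
  assert (Ot : orbit n (in_group2 a la b mu) a (line_pt a b t))
    by (apply orbit_line; exists l, t; split; auto; intros i _; reflexivity).
  apply (line_pt_inj n a b t Czero Hab); intros i Hi.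
  rewrite (Hiso _ Ot), (line_pt_0 n a b i Hi); auto.
  rewrite (vdist_veq_l n a (line_pt a b Czero)), vdist_line_pt
    by (intros j Hj; symmetry; exact (line_pt_0 n a b j Hj)).
  apply sqrt_lt_of_lt_sqr; [apply Rmult_le_pos; [apply Cnorm2_nonneg | lra] | auto |].
  replace (Cnorm2 (Csub Czero t)) with (Cnorm2 t) by (destruct t; unfold_C; ring).
  apply (Rmult_lt_compat_r (sqdist n a b)) in Ht; auto.
  replace (e * e / sqdist n a b * sqdist n a b) with (e * e) in Ht by (field; lra); exact Ht.
Qed.

Section DiscreteSubgroup.
Variable L : Cx -> Prop.
Hypothesis L_zero : L Czero.
Hypothesis L_add : forall s t, L s -> L t -> L (Cadd s t).
Hypothesis L_opp : forall t, L t -> L (Copp t).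

Lemma subgroup_scale_int k t : L t -> L (Cscale (IZR k) t).
Proof.
  intro Ht; induction k using Z.peano_ind.
  - replace (Cscale (IZR 0) t) with Czero by (unfold Cscale; unfold_C; f_equal; ring); auto.
  - replace (Cscale (IZR (Z.succ k)) t) with (Cadd (Cscale (IZR k) t) t)
      by (rewrite succ_IZR; unfold Cscale; unfold_C; f_equal; ring); auto.
  - replace (Cscale (IZR (Z.pred k)) t) with (Cadd (Cscale (IZR k) t) (Copp t))
      by (rewrite <- Z.sub_1_r, minus_IZR; unfold Cscale; unfold_C; f_equal; ring); auto.
Qed.

(* With [m] the integer nearest to [c], the powers of [r = c - m] (|r| <= 1/2) shrink
   [t0] into the punctured neighbourhood of 0 that [L] avoids, unless [r = 0]. *)
Lemma discrete_subgroup_scale_int c d t0 :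
  (forall t, L t -> L (Cscale c t)) -> L t0 -> t0 <> Czero -> 0 < d ->
  (forall t, L t -> Cnorm2 t < d -> t = Czero) -> exists m, c = IZR m.
Proof.
  intros Hc Ht0 Hnz Hd Hdisc.
  exists (up (c + 1/2) - 1)%Z; set (r := c - IZR (up (c + 1/2) - 1)).
  destruct (archimed (c + 1/2)) as [A1 A2].
  assert (Hr : -1/2 <= r < 1/2) by (unfold r; rewrite minus_IZR; lra).
  assert (Hrs : forall t, L t -> L (Cscale r t)).
  { intros t Ht; replace (Cscale r t)
      with (Cadd (Cscale c t) (Copp (Cscale (IZR (up (c + 1/2) - 1)) t)))
      by (unfold r, Cscale; unfold_C; f_equal; ring).
    auto using subgroup_scale_int. }
  assert (Hpow : forall k, L (Cscale (r ^ k) t0)).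
  { induction k; simpl.
    - replace (Cscale 1 t0) with t0 by (unfold Cscale; destruct t0; simpl; f_equal; ring); auto.
    - replace (Cscale (r * r ^ k) t0) with (Cscale r (Cscale (r ^ k) t0))
        by (unfold Cscale; simpl; f_equal; ring); auto. }
  destruct (Req_dec r 0) as [R0|R0]; [unfold r in R0; lra | exfalso].
  pose proof (Cnorm2_pos _ Hnz).
  destruct (exists_pow_mul_lt (r * r) (Cnorm2 t0) d) as [K HK]; auto; try nra.
  assert (E : Cscale (r ^ K) t0 = Czero).
  { apply Hdisc; auto.
    replace (Cnorm2 (Cscale (r ^ K) t0)) with ((r * r) ^ K * Cnorm2 t0); auto.
    rewrite Rpow_mult_distr; unfold Cscale, Cnorm2; simpl; ring. }
  apply (f_equal Cnorm2) in E.
  replace (Cnorm2 (Cscale (r ^ K) t0)) with ((r * r) ^ K * Cnorm2 t0) in E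
    by (rewrite Rpow_mult_distr; unfold Cscale, Cnorm2; simpl; ring).
  pose proof (pow_lt (r * r) K ltac:(nra)); unfold_C; nra.
Qed.

End DiscreteSubgroup.

Section Translations.
Variables la mu : Cx.
Hypothesis la_nz : la <> Czero.
Hypothesis mu_nz : mu <> Czero.

Definition translation (t : Cx) : Prop :=
  aff_group la mu Cone t /\ aff_group la mu Cone (Copp t).

Ltac unit_ring :=
  repeat match goal with H : translation _ |- _ => clear H end;
  pose proof (Cmul_Cinv la la_nz) as El; pose proof (Cmul_Cinv mu mu_nz) as Em;
  revert El Em; generalize (Cinv la) (Cinv mu); intros lai mui El Em;
  destruct la as [x1 y1], lai as [p1 q1], mu as [x2 y2], mui as [p2 q2];
  repeat match goal with
         | t : Cx |- _ => first [constr_eq t la; fail 1 | constr_eq t mu; fail 1 | destruct t]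
         end;
  unfold_C; injection El; injection Em; intros; f_equal; nsatz.

Lemma translation_zero : translation Czero.
Proof. split; eapply aff_group_ext; try constructor; unfold_C; f_equal; ring. Qed.

Lemma translation_add s t : translation s -> translation t -> translation (Cadd s t).
Proof.
  intros [Hs Hs'] [Ht Ht']; split.
  - eapply aff_group_ext; [apply (aff_group_comp _ _ _ _ _ _ Hs Ht) | |];
      destruct s, t; unfold_C; f_equal; ring.
  - eapply aff_group_ext; [apply (aff_group_comp _ _ _ _ _ _ Hs' Ht') | |];
      destruct s, t; unfold_C; f_equal; ring.
Qed.

Lemma translation_opp t : translation t -> translation (Copp t).
Proof.
  intros [Ht Ht']; split; auto.
  eapply aff_group_ext; [exact Ht | reflexivity | destruct t; unfold_C; f_equal; ring].
Qed.

(* Conjugating the translation by [t] by [z |-> l1 z + v1] gives the translation by [l1 t]. *)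
Lemma translation_conj l1 v1 l2 v2 :
  aff_group la mu l1 v1 -> aff_group la mu l2 v2 ->
  Cmul l1 l2 = Cone -> Cadd (Cmul l1 v2) v1 = Czero ->
  forall t, translation t -> translation (Cmul l1 t).
Proof.
  intros G1 G2 E1 E2 t [Ht Ht'].
  destruct l1 as [p q], l2 as [r s], v1 as [x y], v2 as [z w]; unfold_C.
  injection E1; injection E2; intros.
  split.
  - eapply aff_group_ext;
      [apply (aff_group_comp _ _ _ _ _ _ (aff_group_comp _ _ _ _ _ _ G1 Ht) G2) | |];
      destruct t; unfold_C; f_equal; nsatz.
  - eapply aff_group_ext;
      [apply (aff_group_comp _ _ _ _ _ _ (aff_group_comp _ _ _ _ _ _ G1 Ht') G2) | |];
      destruct t; unfold_C; f_equal; nsatz.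
Qed.

Lemma translation_mul_la t : translation t -> translation (Cmul la t).
Proof.
  intro Ht; replace (Cmul la t) with (Cmul (Cmul la Cone) t) by unit_ring.
  apply (translation_conj _ _ _ _ (aff_f _ _ _ _ (aff_id _ _)) (aff_fi _ _ _ _ (aff_id _ _)));
    auto; unit_ring.
Qed.

Lemma translation_mul_Cinv_la t : translation t -> translation (Cmul (Cinv la) t).
Proof.
  intro Ht; replace (Cmul (Cinv la) t) with (Cmul (Cmul (Cinv la) Cone) t) by unit_ring.
  apply (translation_conj _ _ _ _ (aff_fi _ _ _ _ (aff_id _ _)) (aff_f _ _ _ _ (aff_id _ _)));
    auto; unit_ring.
Qed.

Lemma translation_mul_mu t : translation t -> translation (Cmul mu t).
Proof.
  intro Ht; replace (Cmul mu t) with (Cmul (Cmul mu Cone) t) by unit_ring.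
  apply (translation_conj _ _ _ _ (aff_g _ _ _ _ (aff_id _ _)) (aff_gi _ _ _ _ (aff_id _ _)));
    auto; unit_ring.
Qed.

Lemma translation_mul_Cinv_mu t : translation t -> translation (Cmul (Cinv mu) t).
Proof.
  intro Ht; replace (Cmul (Cinv mu) t) with (Cmul (Cmul (Cinv mu) Cone) t) by unit_ring.
  apply (translation_conj _ _ _ _ (aff_gi _ _ _ _ (aff_id _ _)) (aff_g _ _ _ _ (aff_id _ _)));
    auto; unit_ring.
Qed.

Lemma translation_commutator : translation (Cmul (Csub Cone mu) (Csub la Cone)).
Proof.
  split.
  - eapply aff_group_ext; [apply aff_f, aff_g, aff_fi, aff_gi, aff_id | |]; unit_ring.
  - eapply aff_group_ext; [apply aff_g, aff_f, aff_gi, aff_fi, aff_id | |]; unit_ring.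
Qed.

End Translations.

Lemma Cscale_re l t : Cadd (Cmul l t) (Cmul (Cconj l) t) = Cscale (2 * fst l) t.
Proof. destruct l, t; unfold Cscale, Cconj; unfold_C; f_equal; ring. Qed.

Lemma Cscale_re_mul l m t :
  Cadd (Cmul l (Cmul m t)) (Cmul (Cconj l) (Cmul (Cconj m) t))
  = Cscale (2 * (fst l * fst m - snd l * snd m)) t.
Proof. destruct l, m, t; unfold Cscale, Cconj; unfold_C; f_equal; ring. Qed.

Lemma Cscale_re_mul_conj l m t :
  Cadd (Cmul l (Cmul (Cconj m) t)) (Cmul (Cconj l) (Cmul m t))
  = Cscale (2 * (fst l * fst m + snd l * snd m)) t.
Proof. destruct l, m, t; unfold Cscale, Cconj; unfold_C; f_equal; ring. Qed.

(* [2 Re] of [la], [mu], [la mu] and [la conj(mu)] preserve the lattice of translations. *)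
Lemma unit_traces_int la mu d :
  Cnorm2 la = 1 -> Cnorm2 mu = 1 -> la <> Cone -> mu <> Cone -> 0 < d ->
  (forall l t, aff_group la mu l t -> Cnorm2 t < d -> t = Czero) ->
  exists m1 m2 m3 m4 : Z,
    2 * fst la = IZR m1 /\ 2 * fst mu = IZR m2 /\
    2 * (fst la * fst mu - snd la * snd mu) = IZR m3 /\
    2 * (fst la * fst mu + snd la * snd mu) = IZR m4.
Proof.
  intros Nla Nmu Hla1 Hmu1 Hd Hdisc.
  assert (Hla0 : la <> Czero) by (intros ->; unfold_C; lra).
  assert (Hmu0 : mu <> Czero) by (intros ->; unfold_C; lra).
  assert (Ht0 : Cmul (Csub Cone mu) (Csub la Cone) <> Czero).
  { intro E; apply (f_equal Cnorm2) in E; rewrite Cnorm2_mul in E.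
    replace (Cnorm2 Czero) with 0 in E by (unfold_C; ring).
    apply Rmult_integral in E; destruct E as [E|E]; apply Cnorm2_eq0, Csub_eq0 in E; auto. }
  assert (Hint : forall c, (forall t, translation la mu t -> translation la mu (Cscale c t)) ->
                           exists m, c = IZR m).
  { intros c Hc; apply (discrete_subgroup_scale_int (translation la mu)
      (translation_zero la mu) (translation_add la mu) (translation_opp la mu) c d
      (Cmul (Csub Cone mu) (Csub la Cone))); auto.
    - apply translation_commutator; auto.
    - intros t [Ht _]; exact (Hdisc _ _ Ht). }
  pose proof (translation_mul_la la mu Hla0 Hmu0) as Tla.
  pose proof (translation_mul_Cinv_la la mu Hla0 Hmu0) as Tlai.
  pose proof (translation_mul_mu la mu Hla0 Hmu0) as Tmu.
  pose proof (translation_mul_Cinv_mu la mu Hla0 Hmu0) as Tmui.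
  rewrite Cinv_unit in Tlai, Tmui by assumption.
  pose proof (translation_add la mu) as Tadd.
  destruct (Hint (2 * fst la)) as [m1 E1]; [intros; rewrite <- Cscale_re; auto|].
  destruct (Hint (2 * fst mu)) as [m2 E2]; [intros; rewrite <- Cscale_re; auto|].
  destruct (Hint (2 * (fst la * fst mu - snd la * snd mu))) as [m3 E3];
    [intros; rewrite <- Cscale_re_mul; auto|].
  destruct (Hint (2 * (fst la * fst mu + snd la * snd mu))) as [m4 E4];
    [intros; rewrite <- Cscale_re_mul_conj; auto|].
  exists m1, m2, m3, m4; auto.
Qed.

Lemma twice_re_unit_range x y m :
  x * x + y * y = 1 -> 2 * x = IZR m -> (x, y) <> Cone -> (-2 <= m <= 1)%Z.
Proof.
  intros N E H; assert (Hb : -2 <= IZR m <= 2) by nra.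
  destruct Hb as [H1 H2]; apply le_IZR in H1; apply le_IZR in H2.
  assert (m <> 2%Z); [|lia].
  intros ->; assert (x = 1) by lra; subst.
  assert (y = 0) by nra; subst; auto.
Qed.

Lemma not_sqr_12 k : IZR k * IZR k <> 12.
Proof.
  intro H; rewrite <- mult_IZR in H; apply eq_IZR in H.
  assert (-4 < k < 4)%Z by nia.
  assert (Hk : (k = -3 \/ k = -2 \/ k = -1 \/ k = 0 \/ k = 1 \/ k = 2 \/ k = 3)%Z) by lia.
  repeat destruct Hk as [-> | Hk]; try discriminate; subst; discriminate.
Qed.

(* [(m4 - m3)^2 = (4 - m1^2) (4 - m2^2)] and [4 - m^2] is [0, 3, 4, 3] for [m = -2 .. 1];
   a mixed product [3 * 4] is not a square. *)
Lemma unit_pair_classification x1 y1 x2 y2 m1 m2 m3 m4 :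
  x1 * x1 + y1 * y1 = 1 -> x2 * x2 + y2 * y2 = 1 -> (x1, y1) <> Cone -> (x2, y2) <> Cone ->
  2 * x1 = IZR m1 -> 2 * x2 = IZR m2 ->
  2 * (x1 * x2 - y1 * y2) = IZR m3 -> 2 * (x1 * x2 + y1 * y2) = IZR m4 ->
  ((x1 = 0 \/ x1 = -1) /\ (x2 = 0 \/ x2 = -1)) \/
  ((x1 = -1 \/ x1 = 1/2 \/ x1 = -1/2) /\ (x2 = -1 \/ x2 = 1/2 \/ x2 = -1/2)).
Proof.
  intros N1 N2 C1 C2 E1 E2 E3 E4.
  assert (K : IZR (m4 - m3) * IZR (m4 - m3)
              = 16 * (1 - (IZR m1 / 2) * (IZR m1 / 2)) * (1 - (IZR m2 / 2) * (IZR m2 / 2))).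
  { rewrite minus_IZR, <- E3, <- E4, <- E1, <- E2.
    replace (2 * x1 / 2) with x1 by field; replace (2 * x2 / 2) with x2 by field; nsatz. }
  pose proof (twice_re_unit_range _ _ _ N1 E1 C1); pose proof (twice_re_unit_range _ _ _ N2 E2 C2).
  assert (Hm1 : (m1 = -2 \/ m1 = -1 \/ m1 = 0 \/ m1 = 1)%Z) by lia.
  assert (Hm2 : (m2 = -2 \/ m2 = -1 \/ m2 = 0 \/ m2 = 1)%Z) by lia.
  destruct Hm1 as [->|[->|[->| ->]]]; destruct Hm2 as [->|[->|[->| ->]]];
    try (left; split; lra); try (right; split; lra);
    exfalso; apply (not_sqr_12 (m4 - m3)); rewrite K; lra.
Qed.

Lemma roots4_of_re x y : x * x + y * y = 1 -> (x = 0 \/ x = -1) -> roots (PI / 2) (x, y).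
Proof.
  intros N [-> | ->].
  - destruct (Rsqr_eq y 1 ltac:(unfold Rsqr; nra)) as [-> | ->].
    + exists 1%Z; unfold Cexpi; rewrite Rmult_1_l, cos_PI2, sin_PI2; reflexivity.
    + exists (-1)%Z; unfold Cexpi.
      replace (IZR (-1) * (PI / 2)) with (- (PI / 2)) by (simpl; ring).
      rewrite cos_neg, sin_neg, cos_PI2, sin_PI2; reflexivity.
  - assert (y = 0) by nra; subst; exists 2%Z; unfold Cexpi.
    replace (IZR 2 * (PI / 2)) with PI by (simpl; field); rewrite cos_PI, sin_PI; reflexivity.
Qed.

Lemma Cexpi_PI3 : Cexpi (PI / 3) = (1/2, s3).
Proof. unfold Cexpi; rewrite cos_PI3, sin_PI3; reflexivity. Qed.

Lemma Cexpi_2PI3 : Cexpi (2 * (PI / 3)) = (-1/2, s3).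
Proof.
  replace (2 * (PI / 3)) with (PI / 3 + PI / 3) by ring.
  rewrite <- Cexpi_add, Cexpi_PI3; unfold Cmul; simpl; pose proof s3_sqr; f_equal; lra.
Qed.

Lemma roots6_of_re x y :
  x * x + y * y = 1 -> (x = -1 \/ x = 1/2 \/ x = -1/2) -> roots (PI / 3) (x, y).
Proof.
  pose proof s3_sqr; intros N [-> | [-> | ->]].
  - assert (y = 0) by nra; subst; exists 3%Z; unfold Cexpi.
    replace (IZR 3 * (PI / 3)) with PI by (simpl; field); rewrite cos_PI, sin_PI; reflexivity.
  - destruct (Rsqr_eq y s3 ltac:(unfold Rsqr; nra)) as [-> | ->].
    + exists 1%Z; rewrite Rmult_1_l, Cexpi_PI3; reflexivity.
    + exists (-1)%Z; replace (IZR (-1) * (PI / 3)) with (- (PI / 3)) by (simpl; ring).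
      rewrite <- Cinv_Cexpi, Cexpi_PI3, Cinv_unit by (unfold_C; lra); reflexivity.
  - destruct (Rsqr_eq y s3 ltac:(unfold Rsqr; nra)) as [-> | ->].
    + exists 2%Z; rewrite Cexpi_2PI3; reflexivity.
    + exists (-2)%Z; replace (IZR (-2) * (PI / 3)) with (- (2 * (PI / 3))) by (simpl; ring).
      rewrite <- Cinv_Cexpi, Cexpi_2PI3, Cinv_unit by (unfold_C; lra); reflexivity.
Qed.

Lemma closed_discrete_orbit_roots n a la b mu :
  Cnorm2 la = 1 -> la <> Cone -> mu <> Czero -> mu <> Cone -> ~ veq n a b ->
  closed_in n (orbit n (in_group2 a la b mu) a) ->
  discrete_in n (orbit n (in_group2 a la b mu) a) ->
  (roots (PI / 2) la /\ roots (PI / 2) mu) \/ (roots (PI / 3) la /\ roots (PI / 3) mu).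
Proof.
  intros Nla Hla1 Hmu0 Hmu1 Hab Hc Hd.
  pose proof (closed_discrete_orbit_unit_mu n a la b mu Hab Hmu0 Hc Hd) as Nmu.
  destruct (orbit_translations_discrete n a la b mu Hab Hd) as [d [Hdpos Hdisc]].
  destruct (unit_traces_int la mu d Nla Nmu Hla1 Hmu1 Hdpos Hdisc)
    as [m1 [m2 [m3 [m4 [E1 [E2 [E3 E4]]]]]]].
  destruct la as [x1 y1], mu as [x2 y2]; unfold Cnorm2 in *; simpl in *.
  destruct (unit_pair_classification x1 y1 x2 y2 m1 m2 m3 m4) as [[X1 X2]|[X1 X2]]; auto.
  - left; split; apply roots4_of_re; auto.
  - right; split; apply roots6_of_re; auto.
Qed.

Lemma aff_group_linear_closed (P : Cx -> Prop) la mu :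
  P Cone -> P la -> P (Cinv la) -> P mu -> P (Cinv mu) ->
  (forall u w, P u -> P w -> P (Cmul u w)) ->
  forall l v, aff_group la mu l v -> P l.
Proof. intros H1 Hla Hlai Hmu Hmui Hmul l v H; induction H; auto. Qed.

Lemma in_SR_of_roots (F : Cx -> Prop) n s a la b mu :
  (forall x, roots s x -> F x) -> roots s la -> roots s mu ->
  forall h, in_group2 a la b mu h -> in_SR F n h.
Proof.
  intros HF Hla Hmu h Hh; destruct (in_group2_aff a la b mu h Hh) as [l [v [Hg He]]].
  exists l, (fun i => Csub (line_pt a b v i) (Cmul l (a i))); split.
  - apply HF, (aff_group_linear_closed (roots s) la mu) with (v := v);
      auto using roots_one, roots_inv, roots_mul.
  - intros z i _; rewrite He; destruct (z i), (a i), (line_pt a b v i), l; unfold_C; f_equal; ring.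
Qed.

Lemma Cexpi_neq_one theta : in_piQnotZ theta -> Cexpi theta <> Cone.
Proof.
  intros [p [q [Hq [Hndiv ->]]]] E.
  assert (Hsin : sin (PI * IZR p / IZR q) = 0) by (unfold Cexpi, Cone in E; injection E; auto).
  apply sin_eq_0_0 in Hsin; destruct Hsin as [k Hk]; apply Hndiv; exists k.
  pose proof PI_RGT_0; assert (IZR q <> 0) by (apply not_0_IZR; auto).
  apply eq_IZR; rewrite mult_IZR; apply (Rmult_eq_reg_l PI); [|lra].
  field_simplify_eq in Hk; auto; lra.
Qed.

Theorem proposition3p4 (n : nat) (theta : R) (mu : Cx) (a b : vec) :
  in_piQnotZ theta ->
  mu <> Czero -> mu <> Cone ->
  ~ veq n a b ->
  (closed_in n (orbit n (in_group2 a (Cexpi theta) b mu) a) /\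
   discrete_in n (orbit n (in_group2 a (Cexpi theta) b mu) a))
  <->
  ((forall h, in_group2 a (Cexpi theta) b mu h -> in_SR F2 n h) \/
   (forall h, in_group2 a (Cexpi theta) b mu h -> in_SR F3 n h)).
Proof.
  intros Hth Hmu0 Hmu1 Hab; split.
  - intros [Hc Hd].
    destruct (closed_discrete_orbit_roots n a (Cexpi theta) b mu) as [[Hla Hmu]|[Hla Hmu]];
      auto using Cnorm2_Cexpi, Cexpi_neq_one; [left|right].
    + apply (in_SR_of_roots F2 n (PI / 2)); auto; apply F2_roots.
    + apply (in_SR_of_roots F3 n (PI / 3)); auto; apply F3_roots.
  - assert (Hn : exists i, (i < n)%nat)
      by (destruct (exists_coord_neq n a b Hab) as [i [Hi _]]; eauto).
    assert (Hgen : forall F, (forall h, in_group2 a (Cexpi theta) b mu h -> in_SR F n h) ->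
                             F (Cexpi theta) /\ F mu).
    { intros F H; split.
      - apply (in_SR_generator F n a); auto; exact (H _ (ig_f _ _ _ _ _ (ig_id _ _ _ _))).
      - apply (in_SR_generator F n b); auto; exact (H _ (ig_g _ _ _ _ _ (ig_id _ _ _ _))). }
    intros [H|H]; destruct (Hgen _ H) as [Hla Hmu].
    + apply (orbit_closed_discrete_of_roots n a b _ _ (PI / 2) gauss_int);
        auto using roots4_gauss_int, gauss_int_mul, gauss_int_add, gauss_int_sub, gauss_int_sep;
        apply F2_roots; auto.
    + apply (orbit_closed_discrete_of_roots n a b _ _ (PI / 3) eisen_int);
        auto using roots6_eisen_int, eisen_int_mul, eisen_int_add, eisen_int_sub, eisen_int_sep;
        apply F3_roots; auto.
Qed.
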